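(* Let $\Omega$ be a topological Hausdorff space, $E$ a non-trivial locally convex Hausdorff space over $\mathbb{K}$ and $\mathcal{FV}(\Omega)$ a dom-space such that $\mathcal{FV}(\Omega)\subset\mathcal{C}(\Omega)$ as a linear subspace. If the map $\delta\colon\Omega\to\mathcal{FV}(\Omega)'_\kappa$, $x\mapsto\delta_x$, is continuous, then $S(u)\in\mathcal{C}(\Omega,E)$ for all $u\in\mathcal{FV}(\Omega)\varepsilon E$.
   Context: $\mathbb{K}\in\{\mathbb{R},\mathbb{C}\}$; $\mathcal{C}(\Omega)$ denotes the continuous $\mathbb{K}$-valued functions, $\mathcal{C}(\Omega,E)$ the continuous $E$-valued ones. Framework: $J,M$ non-empty index sets, $(\omega_m)_{m\in M}$ non-empty sets, $\nu_{j,m}\colon\omega_m\to[0,\infty)$ such that for all $m$, $x\in\omega_m$ some $\nu_{j,m}(x)>0$; $\operatorname{AP}(\Omega)\subset\mathbb{K}^\Omega$ a linear subspace; $T_m\colon\operatorname{dom}T_m\to\mathbb{K}^{\omega_m}$ linear maps on linear subspaces of $\mathbb{K}^\Omega$; $\mathcal{FV}(\Omega):=\{f\in\operatorname{AP}(\Omega)\cap\bigcap_m\operatorname{dom}T_m: |f|_{j,m}:=\sup_{x\in\omega_m}|T_m(f)(x)|\nu_{j,m}(x)<\infty\ \forall j,m\}$ with these seminorms. It is a dom-space if it is Hausdorff, the seminorms are directed and every $\delta_x\colon f\mapsto f(x)$, $x\in\Omega$, belongs to $\mathcal{FV}(\Omega)'$. $\mathcal{FV}(\Omega)'_\kappa$: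 dual with the topology of uniform convergence on absolutely convex compact subsets of $\mathcal{FV}(\Omega)$. $\mathcal{FV}(\Omega)\varepsilon E$: continuous linear maps $\mathcal{FV}(\Omega)'_\kappa\to E$ with the topology of uniform convergence on equicontinuous sets; $S(u)(x):=u(\delta_x)$, $x\in\Omega$. *)

From HB Require Import structures.
From mathcomp Require Import all_boot all_order all_algebra.
From mathcomp Require Import all_classical all_reals all_analysis.
From mathcomp Require Import complex.
From Stdlib Require List.

Set Implicit Arguments.
Unset Strict Implicit.
Unset Printing Implicit Defensive.

Import Order.TTheory GRing.Theory Num.Theory.
Import numFieldTopology.Exports.
Local Open Scope ring_scope.
Local Open Scope classical_set_scope.

(** The scalar field K ∈ {R, C}: [Kfield R false] is the real field R,
    [Kfield R true] is the complex field R[i] = C. *)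
Definition Kfield (R : realType) (b : bool) : numFieldType :=
  if b then (R[i] : numFieldType) else (R : numFieldType).

Definition knorm (R : realType) (b : bool) : Kfield R b -> R :=
  if b as b' return Kfield R b' -> R
  then (fun z : R[i] => Normc.normc z) else (fun x : R => `|x|).

(** Data of the framework: index sets J, M, sets omega_m, weights nu_{j,m},
    the space AP(Omega) and the linear maps T_m with their domains. *)
Record fv_data (R : realType) (b : bool) (Omega : Type) := FVData {
  fv_J : Type;
  fv_M : Type;
  fv_omega : fv_M -> Type;
  fv_nu : forall m : fv_M, fv_J -> fv_omega m -> R;
  fv_AP : set (Omega -> Kfield R b);
  fv_dom : fv_M -> set (Omega -> Kfield R b);
  fv_T : forall m : fv_M, (Omega -> Kfield R b) -> (fv_omega m -> Kfield R b)
}.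

Arguments fv_J {R b Omega} _.
Arguments fv_M {R b Omega} _.
Arguments fv_omega {R b Omega} _ m.
Arguments fv_nu {R b Omega} _ m j x.
Arguments fv_AP {R b Omega} _ f.
Arguments fv_dom {R b Omega} _ m f.
Arguments fv_T {R b Omega} _ m f x.

Section FV.
Context {R : realType} {b : bool} {Omega : Type} (D : fv_data R b Omega).
Local Notation K := (Kfield R b).

Definition fv_seminorm (j : fv_J D) (m : fv_M D) (f : Omega -> K) : \bar R :=
  ereal_sup [set ((knorm (fv_T D m f x)) * fv_nu D m j x)%:E | x in [set: fv_omega D m]].

Definition FVset : set (Omega -> K) :=
  [set f | fv_AP D f /\ (forall m, fv_dom D m f) /\
           (forall j m, (fv_seminorm j m f < +oo)%E)].

Definition FVtype := {f : Omega -> K | FVset f}.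

Definition fv_val (f : FVtype) : Omega -> K := proj1_sig f.

(** Open sets of the locally convex topology generated by the seminorms
    |.|_{j,m}: every point has a basic neighbourhood
    {g | |g - f|_{j,m} < e for (j,m) in a finite list} inside the set. *)
Definition fv_open (A : set FVtype) : Prop :=
  forall f, A f -> exists (s : seq (fv_J D * fv_M D)) (e : R), 0 < e /\
    forall g : FVtype,
      (forall i, List.In i s ->
         (fv_seminorm i.1 i.2 (fun x => (fv_val g x - fv_val f x)%R) < e%:E)%E) ->
      A g.

Lemma fv_openT : fv_open setT.
Proof. by move=> f _; exists nil, 1; split. Qed.

Lemma fv_openI : setI_closed fv_open.
Proof.
move=> A B oA oB f [Af Bf].
have [s1 [e1 [e10 H1]]] := oA f Af.
have [s2 [e2 [e20 H2]]] := oB f Bf.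
exists (s1 ++ s2), (Num.min e1 e2); split; first by rewrite lt_min e10 e20.
move=> g Hg; split.
- apply: H1 => i Hi; apply: (lt_le_trans (Hg i _)).
    by apply: List.in_or_app; left.
  by rewrite lee_fin ge_min lexx.
- apply: H2 => i Hi; apply: (lt_le_trans (Hg i _)).
    by apply: List.in_or_app; right.
  by rewrite lee_fin ge_min lexx orbT.
Qed.

Lemma fv_open_bigU (I : Type) (F : I -> set FVtype) :
  (forall i, fv_open (F i)) -> fv_open (\bigcup_i F i).
Proof.
move=> oF f [i _ Fif].
have [s [e [e0 H]]] := oF i f Fif.
by exists s, e; split => // g Hg; exists i => //; apply: H.
Qed.

End FV.

HB.instance Definition _ (R : realType) (b : bool) (Omega : Type)
  (D : fv_data R b Omega) := gen_eqMixin (FVtype D).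
HB.instance Definition _ (R : realType) (b : bool) (Omega : Type)
  (D : fv_data R b Omega) := gen_choiceMixin (FVtype D).
HB.instance Definition _ (R : realType) (b : bool) (Omega : Type)
  (D : fv_data R b Omega) :=
  isOpenTopological.Build (FVtype D) (@fv_openT R b Omega D)
    (@fv_openI R b Omega D) (@fv_open_bigU R b Omega D).

Section Dual.
Context {R : realType} {b : bool} {Omega : Type} (D : fv_data R b Omega).
Local Notation K := (Kfield R b).

Definition absconvex (A : set (FVtype D)) : Prop :=
  forall (f g h : FVtype D) (a c : K), A f -> A g ->
    knorm a + knorm c <= 1 ->
    (forall x, fv_val h x = a * fv_val f x + c * fv_val g x) -> A h.

Definition acc_family : set (set (FVtype D)) :=
  [set A | absconvex A /\ compact A].

(** Functions FV(Omega) -> K with the topology of uniform convergence on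
    absolutely convex compact sets (the kappa topology). *)
Definition kappa_space := {family acc_family, FVtype D -> K}.

Definition fv_linear (y : FVtype D -> K) : Prop :=
  forall (f g h : FVtype D) (a : K),
    (forall x, fv_val h x = a * fv_val f x + fv_val g x) ->
    y h = a * y f + y g.

(** The dual FV(Omega)', seen inside kappa_space; with the subspace topology
    this is FV(Omega)'_kappa. *)
Definition fv_dual : set kappa_space :=
  [set y | fv_linear y /\ continuous (y : FVtype D -> K)].

Definition fv_delta (x : Omega) : kappa_space := fun f => fv_val f x.

Definition dom_space : Prop :=
  [/\ hausdorff_space (FVtype D),
      (forall (j1 : fv_J D) (m1 : fv_M D) (j2 : fv_J D) (m2 : fv_M D),
         exists (j : fv_J D) (m : fv_M D) (C : R), 0 < C /\
           forall f : FVtype D,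
             (fv_seminorm j1 m1 (fv_val f) <= C%:E * fv_seminorm j m (fv_val f))%E /\
             (fv_seminorm j2 m2 (fv_val f) <= C%:E * fv_seminorm j m (fv_val f))%E)
    & forall x : Omega, fv_dual (fv_delta x)].

(** FV(Omega) eps E: continuous linear maps FV(Omega)'_kappa -> E
    (represented on kappa_space; only their restriction to fv_dual matters). *)
Definition eps_prod (E : tvsType K) : set (kappa_space -> E) :=
  [set u | (forall (y1 y2 y3 : kappa_space) (a : K),
              fv_dual y1 -> fv_dual y2 ->
              (forall f, y3 f = a * y1 f + y2 f) ->
              u y3 = a *: u y1 + u y2)
           /\ {within fv_dual, continuous u}].

Definition fv_S (E : tvsType K) (u : kappa_space -> E) : Omega -> E :=
  fun x => u (fv_delta x).

End Dual.

Arguments fv_S {R b Omega} D {E} u _.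
Arguments eps_prod {R b Omega} D E _.
Arguments fv_delta {R b Omega} D x.
Arguments fv_dual {R b Omega} D _.
Arguments fv_val {R b Omega D} f x.

From HB Require Import structures.
From mathcomp Require Import all_boot all_order all_algebra.
From mathcomp Require Import all_classical all_reals all_analysis.
From mathcomp Require Import complex.
Import Order.TTheory GRing.Theory Num.Theory.
Import numFieldTopology.Exports.
Local Open Scope ring_scope.
Local Open Scope classical_set_scope.

(* S(u) = u \o delta. Every delta_x lies in FV(Omega)', where u is continuous
   for the kappa topology, and delta is continuous into that topology, so the
   composite is continuous. *)

Lemma continuous_comp_within {X Y Z : topologicalType} (A : set Y)
    (f : X -> Y) (g : Y -> Z) :
  (forall x, A (f x)) -> continuous f -> {within A, continuous g} ->
  continuous (g \o f).
Proof.
move=> fA cf /subspace_continuousP cg x.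
have f_within : f @ x --> within A (nbhs (f x)).
  move=> P /= AP.
  apply: (@filterS _ _ _ (f @^-1` [set y | A y -> P y])); last exact: cf x _ AP.
  by move=> z /=; apply; exact: fA.
exact: cvg_trans (cvg_app g f_within) (cg _ (fA x)).
Qed.

Theorem proposition4p1 (R : realType) (b : bool)
  (Omega : topologicalType) (D : fv_data R b Omega) (E : tvsType (Kfield R b)) :
  (* standing assumptions of the framework *)
  inhabited (fv_J D) -> inhabited (fv_M D) ->
  (forall m, inhabited (fv_omega D m)) ->
  (forall m j x, 0 <= fv_nu D m j x) ->
  (forall m x, exists j, 0 < fv_nu D m j x) ->
  fv_AP D (fun _ => 0) ->
  (forall f g (a : Kfield R b), fv_AP D f -> fv_AP D g ->
     fv_AP D (fun x => a * f x + g x)) ->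
  (forall m, fv_dom D m (fun _ => 0)) ->
  (forall m f g (a : Kfield R b), fv_dom D m f -> fv_dom D m g ->
     fv_dom D m (fun x => a * f x + g x)) ->
  (forall m f g (a : Kfield R b), fv_dom D m f -> fv_dom D m g ->
     fv_T D m (fun x => a * f x + g x) = (fun y => a * fv_T D m f y + fv_T D m g y)) ->
  (* hypotheses of the proposition *)
  hausdorff_space Omega ->
  hausdorff_space E ->
  (exists e : E, e != 0) ->
  dom_space D ->
  (forall f : FVtype D, continuous (fv_val f)) ->
  continuous (fv_delta D) ->
  forall u, eps_prod D E u -> continuous (fv_S D u).
Proof.
move=> _ _ _ _ _ _ _ _ _ _ _ _ _ [_ _ delta_dual] _ delta_cont u [_ u_cont].
exact: continuous_comp_within delta_dual delta_cont u_cont.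
Qed.
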